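(* Let $\Sigma=(\mathbf{x},\mathbf{F})$ be an LP seed of rank $n\ge2$ satisfying Condition 1.2. Let $y=\sum_{m=a}^{b}c_mx_1^m$ with $a\le b$ integers, $c_m\in R^{st}[x_2,x'_2,\dots,x_n,x'_n]$ and $c_a\ne0$. Then $LT(y)=\varphi(c_a)\,x_1^a$.
   Context: $R$ is a unique factorization domain containing $\mathbb{Z}$ and $\mathcal{F}$ is the field of rational functions in $n$ variables over $\mathrm{Frac}(R)$. An LP seed of rank $n$ is a pair $(\mathbf{x},\mathbf{F})$ where $\mathbf{x}=\{x_1,\dots,x_n\}$ is a transcendence basis of $\mathcal{F}$ over $\mathrm{Frac}(R)$ and $\mathbf{F}=\{F_1,\dots,F_n\}$ are irreducible polynomials in $R[x_1,\dots,x_n]$ with $x_j\nmid F_i$ for all $i,j$ and $F_i$ not involving $x_i$. The exchange Laurent polynomial is $\hat F_j=F_j/\prod_{k\neq j}x_k^{a_k}$, with $a_k\in\mathbb{Z}_{\ge0}$ maximal such that $F_k^{a_k}$ divides $F_j|_{x_k\leftarrow F_k/x'_k}$ in $R[x_1,\dots,x_{k-1},(x'_k)^{-1},x_{k+1},\dots,x_n]$. Set $x'_j=\hat F_j/x_j$. Lexicographic order on $\mathbb{Z}^n$: $\mathbf{a}\prec\mathbf{a}'$ if the first nonzero entry of $\mathbf{a}'-\mathbf{a}$ is positive; the lexicographically first monomial of a polynomial is its term with $\prec$-smallest exponent vector. Condition 1.2: for every $k\in[1,n]$, with $M_k$ the lexicographically first monomial of $F_k$: (i) $\hat F_k=F_k$;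 (ii) $M_k=x_{k+1}^{v_{k+1,k}}\cdots x_n^{v_{n,k}}$ (coefficient $1$) with $v_{\cdot,k}\in\mathbb{Z}_{\ge0}$ for $k\in[1,n-1]$, and $M_n=1$; (iii) if $k\ne1$ and $F_k$ involves $x_1$, then every monomial of $F_k-M_k$ is divisible by $x_1$; (iv) if $k\notin\{1,2\}$, $F_k$ does not involve $x_1$, and there is $i\in[2,k-1]$ such that $x_k$ divides $M_i$, then every monomial of $F_k-M_k$ is divisible by $x_i$. Under (i), $R[x_2,x'_2,\dots,x_n,x'_n]\subseteq R[x_1,x_2^{\pm1},\dots,x_n^{\pm1}]$; $\varphi$ is the restriction to $R[x_2,x'_2,\dots,x_n,x'_n]$ of the $R$-algebra homomorphism $R[x_1,x_2^{\pm1},\dots,x_n^{\pm1}]\to R[x_2^{\pm1},\dots,x_n^{\pm1}]$ with $x_1\mapsto0$, $x_i^{\pm1}\mapsto x_i^{\pm1}$ ($i\ge2$). $R^{st}[x_2,x'_2,\dots,x_n,x'_n]$ is the $R$-span of the monomials in $x_2,x'_2,\dots,x_n,x'_n$ containing no product $x_ix'_i$. For $y\in R[x_1^{\pm1},\dots,x_n^{\pm1}]$, $LT(y)$ is the sum of all terms (with nonzero coefficient) of the Laurent expansion of $y$ in $x_1,\dots,x_n$ having the smallest power of $x_1$. *)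

From HB Require Import structures.
From mathcomp Require Import all_boot all_order all_algebra.
From mathcomp Require Import fraction.
From mathcomp.multinomials Require Import mpoly.

Set Implicit Arguments.
Unset Strict Implicit.
Unset Printing Implicit Defensive.

Import Order.TTheory GRing.Theory Num.Theory.
Local Open Scope ring_scope.

Notation "x %:F" := (@FracField.tofrac _ x) : ring_scope.

Definition rdvd (T : comNzRingType) (a b : T) : Prop := exists q, b = q * a.

Definition irreducible_elt (T : comUnitRingType) (p : T) : Prop :=
  p != 0 /\ ~~ (p \is a GRing.unit) /\
  forall a b : T, p = a * b -> a \is a GRing.unit \/ b \is a GRing.unit.

Definition prime_elt (T : comUnitRingType) (p : T) : Prop :=
  p != 0 /\ ~~ (p \is a GRing.unit) /\
  forall a b : T, rdvd p (a * b) -> rdvd p a \/ rdvd p b.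

(* Unique factorization domain: every nonzero nonunit is a finite product
   of irreducibles, and irreducibles are prime (standard equivalent form of
   existence + uniqueness of factorizations). *)
Definition is_UFD (R : idomainType) : Prop :=
  (forall r : R, r != 0 -> ~~ (r \is a GRing.unit) ->
     exists s : seq R, (forall x, x \in s -> irreducible_elt x) /\
                       r = \prod_(x <- s) x) /\
  (forall r : R, irreducible_elt r -> prime_elt r).

(* R contains Z, i.e. the canonical map Z -> R is injective: char R = 0. *)
Definition contains_Z (R : idomainType) : Prop := [pchar R] =i pred0.

Section LP.
Variables (R : idomainType) (n : nat).

Local Notation P := {mpoly R[n]}.
Local Notation K := {fraction P}.

(* the variable x_i (0-based index i; the paper's x_1 is index 0) *)
Definition xv (i : 'I_n) : P := 'X_i.
Definition xK (i : 'I_n) : K := (xv i)%:F.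

Definition involves (p : P) (i : 'I_n) : Prop :=
  exists2 m, m \in msupp p & (0 < m i)%N.

(* LP seed (x, F) with x the standard variables: each F_i is irreducible,
   no x_j divides F_i, and F_i does not involve x_i. *)
Definition LP_seed (F : 'I_n -> P) : Prop :=
  forall i, irreducible_elt (F i) /\ (forall j, ~ rdvd (xv j) (F i)) /\
            ~ involves (F i) i.

(* F_j |_{x_k <- F_k / x'_k}, viewed in R[x_1,..,x_{k-1},(x'_k)^{-1},x_{k+1},..,x_n],
   where the variable x_k is reused as the name of (x'_k)^{-1}. *)
Definition subst_exch (F : 'I_n -> P) (j k : 'I_n) : P :=
  F j \mPo [tuple (if i == k then F k * 'X_i else 'X_i) | i < n].

Definition maxpow (a : nat) (f g : P) : Prop :=
  rdvd (f ^+ a) g /\ ~ rdvd (f ^+ a.+1) g.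

Definition hatF (F : 'I_n -> P) (j : 'I_n) (h : K) : Prop :=
  exists a : 'I_n -> nat,
    a j = 0%N /\ (forall k, k != j -> maxpow (a k) (F k) (subst_exch F j k)) /\
    h = (F j)%:F / (\prod_(k < n) xv k ^+ a k)%:F.

(* x'_j = \hat F_j / x_j; under Condition 1.2 (i), \hat F_j = F_j. *)
Definition xprime (F : 'I_n -> P) (j : 'I_n) : K := (F j)%:F / xK j.

Definition lexlt (m1 m2 : 'X_{1..n}) : Prop :=
  exists i : 'I_n, (forall j : 'I_n, (j < i)%N -> m1 j = m2 j) /\ (m1 i < m2 i)%N.

Definition lexfirst (p : P) (m : 'X_{1..n}) : Prop :=
  m \in msupp p /\ forall m', m' \in msupp p -> m' != m -> lexlt m m'.

Definition deg1 (m : 'X_{1..n}) : nat := (\sum_(i < n | val i == 0%N) m i)%N.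

(* Condition 1.2; M_k is the monomial 'X_[mk k] (with coefficient 1),
   paper indices are shifted by one (paper's k is our k+1). *)
Definition condition12 (F : 'I_n -> P) : Prop :=
  (forall k, hatF F k (F k)%:F) /\
  exists mk : 'I_n -> 'X_{1..n},
    (forall k, lexfirst (F k) (mk k)) /\
    (forall k, (F k)@_(mk k) = 1 /\ forall i : 'I_n, (i <= k)%N -> mk k i = 0%N) /\
    (forall k : 'I_n, (1 <= k)%N -> (exists m, m \in msupp (F k) /\ (0 < deg1 m)%N) ->
       forall m, m \in msupp (F k - 'X_[mk k]) -> (0 < deg1 m)%N) /\
    (forall k : 'I_n, (2 <= k)%N -> (forall m, m \in msupp (F k) -> deg1 m = 0%N) ->
       forall i : 'I_n, (1 <= i < k)%N -> (0 < mk i k)%N ->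
       forall m, m \in msupp (F k - 'X_[mk k]) -> (0 < m i)%N).

Definition monoK (m : 'X_{1..n}) : K := ('X_[m])%:F.

Definition stmon (F : 'I_n -> P) (e f : 'X_{1..n}) : K :=
  \prod_(i < n) (xK i ^+ e i * xprime F i ^+ f i).

Definition stcond (e f : 'X_{1..n}) : Prop :=
  deg1 e = 0%N /\ deg1 f = 0%N /\ forall i, e i = 0%N \/ f i = 0%N.

Definition Rst (F : 'I_n -> P) (c : K) : Prop :=
  exists s : seq (R * 'X_{1..n} * 'X_{1..n}),
    (forall t, t \in s -> stcond t.1.2 t.2) /\
    c = \sum_(t <- s) (t.1.1%:MP)%:F * stmon F t.1.2 t.2.

Definition kill1 (p : P) : P :=
  p \mPo [tuple (if val i == 0%N then 0 else 'X_i) | i < n].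

(* phi c = d : writing c = p / x^m with no x_1 in the denominator,
   phi c = p|_{x_1=0} / x^m  (independent of the representation) *)
Definition phi_rel (c d : K) : Prop :=
  exists (p : P) (m : 'X_{1..n}), deg1 m = 0%N /\
    c = p%:F / monoK m /\ d = (kill1 p)%:F / monoK m.

(* LT y = L : writing y = p / x^m (p polynomial), L collects the terms of
   p with the smallest x_1-degree, divided by x^m (independent of the
   representation) *)
Definition LT_rel (y L : K) : Prop :=
  exists (p : P) (m : 'X_{1..n}) (d : nat),
    y = p%:F / monoK m /\
    (exists2 m', m' \in msupp p & deg1 m' = d) /\
    (forall m', m' \in msupp p -> (d <= deg1 m')%N) /\
    L = (\sum_(m' <- msupp p | deg1 m' == d) p@_m' *: 'X_[m'])%:F / monoK m.

End LP.

From HB Require Import structures.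
From mathcomp Require Import all_boot all_order all_algebra.
From mathcomp Require Import fraction.
From mathcomp.multinomials Require Import mpoly.
From mathcomp Require Import zify.
Import Order.TTheory GRing.Theory Num.Theory.
Local Open Scope ring_scope.
Set Implicit Arguments.
Unset Strict Implicit.
Unset Printing Implicit Defensive.

(* Clearing the common monomial denominator x^N of the standard monomials
   occurring in c_a gives c_a = p / x^N with p = sum r x^e F^f x^(N-f), where
   x_1 occurs in neither e, f nor N.  Setting x_1 = 0 sends F_k to a polynomial
   whose lexicographically first monomial is M_k, with coefficient 1.  Since
   M_k only involves x_(k+1), ..., x_n and e, f have disjoint supports, distinct
   standard monomials x^e x'^f get distinct lexicographic heads
   x^e prod M_k^(f_k) x^(N-f); hence phi(c_a) = p|_(x_1=0) / x^N is nonzero.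
   The terms c_m x_1^m with m > a only contribute monomials of x_1-degree
   larger than a, so the lowest x_1-part of y is phi(c_a) x_1^a. *)

Section LexOrder.
Variable n : nat.
Implicit Types m : 'X_{1..n}.

Definition lex m : n.-tuplelexi nat := multinom_val m.

Lemma lex_inj : injective lex.
Proof. exact: val_inj. Qed.

Lemma ltlexP m1 m2 : reflect (lexlt m1 m2) (lex m1 < lex m2)%O.
Proof.
by apply: (iffP ltxi_tuplePlt) => [[i]|[i []]]; exists i.
Qed.

Lemma ltlexD2r m1 m2 k : (lex m1 < lex m2)%O -> (lex (m1 + k)%MM < lex (m2 + k)%MM)%O.
Proof.
case/ltlexP=> i [eq_lt lt_i]; apply/ltlexP; exists i; rewrite !mnmDE ltn_add2r.
by split=> // j /eq_lt; rewrite !mnmDE => ->.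
Qed.

Lemma lelexD2r m1 m2 k : (lex m1 <= lex m2)%O -> (lex (m1 + k)%MM <= lex (m2 + k)%MM)%O.
Proof. by rewrite !le_eqVlt => /predU1P[/lex_inj->|/(ltlexD2r k)->]; rewrite ?eqxx ?orbT. Qed.

Lemma lelexD m1 m2 k1 k2 : (lex m1 <= lex m2)%O -> (lex k1 <= lex k2)%O ->
  (lex (m1 + k1)%MM <= lex (m2 + k2)%MM)%O.
Proof.
move=> /(lelexD2r k1) le_m /(lelexD2r m2) le_k.
by apply: le_trans le_m _; rewrite [(m2 + k1)%MM]addmC [(m2 + k2)%MM]addmC.
Qed.

Lemma lexD_eq m1 m2 k1 k2 : (lex m1 <= lex m2)%O -> (lex k1 <= lex k2)%O ->
  ((m2 + k2)%MM == (m1 + k1)%MM) = (m2 == m1) && (k2 == k1).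
Proof.
move=> le_m le_k; apply/eqP/andP => [eq_mk|[/eqP-> /eqP->]] //.
have [eq_m|lt_m] := eqVneq m2 m1.
  by split; apply/eqP => //; move: eq_mk; rewrite eq_m => /addmI.
move: le_m; rewrite le_eqVlt (inj_eq lex_inj) eq_sym (negbTE lt_m) /= => lt_m'.
have := lt_le_trans (ltlexD2r k1 lt_m') (lelexD (lexx (lex m2)) le_k).
by rewrite eq_mk ltxx.
Qed.

End LexOrder.

Section LexHead.
Variables (R : idomainType) (n : nat).
Local Notation P := {mpoly R[n]}.
Implicit Types (p q : P) (mu : 'X_{1..n}).

Definition lexlb p mu := forall m, m \in msupp p -> (lex mu <= lex m)%O.

Definition lexmonic p mu := lexlb p mu /\ p@_mu = 1.

Lemma mcoeff_msupp_sum p mu : \sum_(m <- msupp p) p@_m * (m == mu)%:R = p@_mu.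
Proof.
rewrite [in RHS](mpolyE p) raddf_sum; apply: eq_bigr => m _.
by rewrite /= mcoeffZ mcoeffX.
Qed.

Lemma lexlbM p q mu1 mu2 : lexlb p mu1 -> lexlb q mu2 -> lexlb (p * q) (mu1 + mu2).
Proof.
move=> lb_p lb_q m /msuppM_le /allpairsP[[m1 m2] /= [m1p m2q ->]].
exact: lelexD (lb_p _ m1p) (lb_q _ m2q).
Qed.

Lemma mcoeffM_lexlb p q mu1 mu2 : lexlb p mu1 -> lexlb q mu2 ->
  (p * q)@_(mu1 + mu2) = p@_mu1 * q@_mu2.
Proof.
move=> lb_p lb_q; rewrite mpolyME raddf_sum big_allpairs /=.
rewrite -(mcoeff_msupp_sum p) -(mcoeff_msupp_sum q) big_distrl /=.
rewrite big_seq [in RHS]big_seq; apply: eq_bigr => m1 m1p.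
rewrite big_distrr /= big_seq [in RHS]big_seq; apply: eq_bigr => m2 m2q.
rewrite /= mcoeffZ mcoeffX lexD_eq ?lb_p ?lb_q //.
by rewrite -mulnb natrM mulrACA.
Qed.

Lemma lexmonicM p q mu1 mu2 : lexmonic p mu1 -> lexmonic q mu2 ->
  lexmonic (p * q) (mu1 + mu2).
Proof.
move=> [lb_p p1] [lb_q q1]; split; first exact: lexlbM.
by rewrite mcoeffM_lexlb // p1 q1 mulr1.
Qed.

Lemma lexmonicX m : lexmonic 'X_[m] m.
Proof.
split=> [m'|]; last by rewrite mcoeffX eqxx.
by rewrite msuppX mem_seq1 => /eqP->.
Qed.

Lemma lexmonic_prod (I : Type) (r : seq I) (g : I -> P) (mu : I -> 'X_{1..n}) :
  (forall i, lexmonic (g i) (mu i)) ->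
  lexmonic (\prod_(i <- r) g i) (\sum_(i <- r) mu i)%MM.
Proof.
move=> g_mu; elim: r => [|i r IHr]; first by rewrite !big_nil -mpolyX0; exact: lexmonicX.
by rewrite !big_cons; exact: lexmonicM.
Qed.

Lemma lexmonicXn p mu k : lexmonic p mu -> lexmonic (p ^+ k) (mu *+ k)%MM.
Proof.
move=> p_mu; elim: k => [|k IHk]; first by rewrite expr0 mulm0n -mpolyX0; exact: lexmonicX.
by rewrite exprS mulmS; exact: lexmonicM.
Qed.

End LexHead.

Section KillFirstVariable.
Variables (R : idomainType) (n : nat).
Hypothesis n_gt0 : (0 < n)%N.
Local Notation P := {mpoly R[n]}.
Local Notation i0 := (Ordinal n_gt0).
Implicit Types (p q : P) (m : 'X_{1..n}).

HB.instance Definition _ := GRing.RMorphism.copy (@kill1 R n)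
  (comp_mpoly [tuple (if val i == 0%N then 0 else 'X_i) | i < n]).

Lemma kill1Z c p : kill1 (c *: p) = c *: kill1 p.
Proof. exact: comp_mpolyZ. Qed.

Lemma deg1E m : deg1 m = m i0.
Proof. by rewrite /deg1 (big_pred1 i0) // => i; rewrite /= -val_eqE. Qed.

Lemma deg1D m1 m2 : deg1 (m1 + m2)%MM = (deg1 m1 + deg1 m2)%N.
Proof. by rewrite !deg1E mnmDE. Qed.

Lemma kill1X m : kill1 ('X_[m] : P) = if deg1 m == 0%N then 'X_[m] else 0.
Proof.
rewrite /kill1 comp_mpolyX deg1E; case: eqP => [m_i0|m_i0].
  rewrite [RHS]mpolyXE_id; apply: eq_bigr => i _; rewrite tnth_mktuple.
  case: eqP => // i_0; have -> : i = i0 by apply: val_inj.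
  by rewrite m_i0 !expr0.
rewrite (bigD1 i0) //= tnth_mktuple /= expr0n.
by move/eqP/negbTE: m_i0 => ->; rewrite mul0r.
Qed.

Lemma mcoeff_kill1 p m : (kill1 p)@_m = if deg1 m == 0%N then p@_m else 0.
Proof.
rewrite {1}(mpolyE p) (raddf_sum (@kill1 R n)) (raddf_sum (mcoeff m)) /=.
rewrite -(mcoeff_msupp_sum p).
under eq_bigr => m' _ do rewrite kill1Z /= mcoeffZ kill1X.
have [m0|m0] := eqVneq (deg1 m) 0%N; [apply: eq_bigr | apply: big1] => m' _.
  have [->|ne] := eqVneq m' m; first by rewrite m0 mcoeffX eqxx.
  by case: ifP => _; rewrite ?mcoeffX ?mcoeff0 ?(negbTE ne) ?mulr0.
have [eq_m|ne] := eqVneq m' m; first by rewrite eq_m (negbTE m0) mcoeff0 mulr0.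
by case: ifP => _; rewrite ?mcoeffX ?mcoeff0 ?(negbTE ne) ?mulr0.
Qed.

End KillFirstVariable.

Section LowestPart.
Variables (R : idomainType) (n : nat).
Hypothesis n_gt0 : (0 < n)%N.
Local Notation P := {mpoly R[n]}.
Local Notation i0 := (Ordinal n_gt0).
Local Notation x1n k := (U_(i0) *+ k)%MM.
Implicit Types (p Q : P) (m : 'X_{1..n}).

Lemma mcoeff_msupp_part p (keep : pred 'X_{1..n}) m :
  (\sum_(m' <- msupp p | keep m') p@_m' *: 'X_[m'])@_m = if keep m then p@_m else 0.
Proof.
rewrite raddf_sum /= big_mkcond /= -(mcoeff_msupp_sum p).
have [keep_m|drop_m] := boolP (keep m); [apply: eq_bigr | apply: big1] => m' _.
  by have [->|ne] := eqVneq m' m; rewrite ?keep_m mcoeffZ mcoeffX ?eqxx ?(negbTE ne) //;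
     case: (keep m'); rewrite ?mcoeff0 ?mulr0.
by have [->|ne] := eqVneq m' m; rewrite ?(negbTE drop_m) ?mulr0 //;
   case: (keep m'); rewrite ?mcoeff0 // mcoeffZ mcoeffX (negbTE ne) mulr0.
Qed.

Lemma deg1_x1n k : deg1 (x1n k) = k.
Proof. by rewrite (deg1E n_gt0) mulmnE mnm1E eqxx mul1n. Qed.

Lemma msuppMx1n Q k m : m \in msupp (Q * 'X_[x1n k]) -> exists m', m = (x1n k + m')%MM.
Proof. by rewrite (perm_mem (msuppMX _ _)) => /mapP[m' _ ->]; exists m'. Qed.

Lemma deg1_msuppMx1n Q k m : m \in msupp (Q * 'X_[x1n k]) -> (k <= deg1 m)%N.
Proof. by case/msuppMx1n=> m' ->; rewrite (deg1D n_gt0) deg1_x1n leq_addr. Qed.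

Lemma deg1_msuppMx1n_eq Q k : kill1 Q != 0 ->
  exists2 m, m \in msupp (Q * 'X_[x1n k]) & deg1 m = k.
Proof.
rewrite -msupp_eq0; case E: (msupp (kill1 Q)) => [|m s] // _.
have: (kill1 Q)@_m != 0 by rewrite -mcoeff_msupp E mem_head.
rewrite (mcoeff_kill1 n_gt0); case: (deg1 m =P 0%N) => [m0 Qm|_]; last by rewrite eqxx.
exists (x1n k + m)%MM; last by rewrite (deg1D n_gt0) deg1_x1n m0 addn0.
by rewrite mcoeff_msupp mcoeffMX.
Qed.

Lemma lowest_deg1_partMx1n Q k :
  \sum_(m <- msupp (Q * 'X_[x1n k]) | deg1 m == k) (Q * 'X_[x1n k])@_m *: 'X_[m]
  = kill1 Q * 'X_[x1n k].
Proof.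
apply/mpolyP => m; rewrite mcoeff_msupp_part.
have [le_k|lt_k] := leqP k (m i0).
  have le_km : (x1n k <= m)%MM.
    by apply/mnm_lepP => i; rewrite mulmnE mnm1E; case: eqP => [<-|]; rewrite ?mul1n ?mul0n.
  rewrite -(submK le_km) addmC !mcoeffMX (mcoeff_kill1 n_gt0) (deg1D n_gt0) deg1_x1n.
  by rewrite -[X in (_ == X)]addn0 eqn_add2l.
rewrite (deg1E n_gt0) (ltn_eqF lt_k); apply/esym/eqP; rewrite -[_ == 0]negbK -mcoeff_msupp.
apply: contraTN lt_k => /msuppMx1n[m' ->].
by rewrite -leqNgt mnmDE mulmnE mnm1E eqxx mul1n leq_addr.
Qed.

End LowestPart.

Section LeadingTerm.
Variables (R : idomainType) (n : nat).
Hypothesis n_gt0 : (0 < n)%N.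
Local Notation P := {mpoly R[n]}.
Local Notation K := {fraction P}.
Local Notation i0 := (Ordinal n_gt0).
Local Notation x1n k := (U_(i0) *+ k)%MM.

Lemma monoK_neq0 (m : 'X_{1..n}) : monoK R m != 0.
Proof.
by rewrite tofrac_eq0; apply/eqP => /(congr1 (mcoeff m)); rewrite mcoeffX eqxx mcoeff0 => /eqP; rewrite oner_eq0.
Qed.

Lemma monoKD (m1 m2 : 'X_{1..n}) : monoK R (m1 + m2) = monoK R m1 * monoK R m2.
Proof. by rewrite /monoK mpolyXD rmorphM. Qed.

Lemma LT_relMx1n (Q : P) (M : 'X_{1..n}) k : kill1 Q != 0 ->
  LT_rel ((Q * 'X_[x1n k])%:F / monoK R M) ((kill1 Q * 'X_[x1n k])%:F / monoK R M).
Proof.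
move=> kQ; exists (Q * 'X_[x1n k]), M, k; split=> //.
split; first exact: (deg1_msuppMx1n_eq n_gt0).
split=> [m|]; first exact: deg1_msuppMx1n.
by rewrite (lowest_deg1_partMx1n n_gt0).
Qed.

Lemma LT_rel_x1pow (Q : P) (M : 'X_{1..n}) (a : int) : kill1 Q != 0 ->
  LT_rel (('X_i0 : P)%:F ^ a * (Q%:F / monoK R M))
         (('X_i0 : P)%:F ^ a * ((kill1 Q)%:F / monoK R M)).
Proof.
move=> kQ; case: a => k.
  have x1E : ('X_i0 : P)%:F ^ k = ('X_[x1n k] : P)%:F :> K by rewrite -exprnP -rmorphXn mpolyXn.
  rewrite x1E !mulrA -!rmorphM (mulrC _ Q) (mulrC _ (kill1 Q)); exact: LT_relMx1n.
have x1E : ('X_i0 : P)%:F ^ Negz k = (monoK R (x1n k.+1))^-1 :> K.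
  by rewrite NegzE -exprz_inv -exprnP exprVn -rmorphXn mpolyXn.
have reassoc (z : K) : (monoK R (x1n k.+1))^-1 * (z / monoK R M) = z / monoK R (M + x1n k.+1).
  by rewrite monoKD invfM [_^-1 * _^-1]mulrC mulrCA.
rewrite x1E !reassoc; have := LT_relMx1n (M + x1n k.+1) 0 kQ.
by rewrite mulm0n mpolyX0 !mulr1.
Qed.

End LeadingTerm.

Lemma seq_argmin (T : eqType) d (O : orderType d) (f : T -> O) (s : seq T) :
  s != [::] -> exists2 t0, t0 \in s & forall t, t \in s -> (f t0 <= f t)%O.
Proof.
elim: s => // x [|y s] IHs _.
  by exists x => [|t]; rewrite ?mem_seq1 // => /eqP->.
have [t1 t1s min_t1] := IHs isT.
have [le_x|lt_t1] := leP (f x) (f t1).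
  exists x => [|t]; rewrite ?mem_head // in_cons => /predU1P[->//|/min_t1].
  exact: le_trans.
exists t1 => [|t]; first by rewrite in_cons t1s orbT.
by rewrite in_cons => /predU1P[->|/min_t1//]; exact: ltW.
Qed.

Section Triangular.
Variables (R : idomainType) (n : nat).
Local Notation P := {mpoly R[n]}.

(* The smallest head hd t0 occurs in no v t with a larger head, so the weights
   of the class of t0 sum to zero; u and v are constant on that class, which
   can therefore be dropped from both sums. *)
Lemma lexmonic_sum_eq0 (T : eqType) (s : seq T) (w : T -> R) (u v : T -> P)
    (hd : T -> 'X_{1..n}) :
  (forall t, t \in s -> lexmonic (v t) (hd t)) ->
  {in s &, forall t t', hd t = hd t' -> u t = u t' /\ v t = v t'} ->
  \sum_(t <- s) w t *: v t = 0 -> \sum_(t <- s) w t *: u t = 0.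
Proof.
move=> v_hd hd_det; have [N] := ubnP (size s).
elim: N s v_hd hd_det => // N IHN s v_hd hd_det size_s sv0.
have [->|s_ne] := eqVneq s [::]; first by rewrite big_nil.
have [t0 t0s min_t0] := seq_argmin (fun t => lex (hd t)) s_ne.
pose same t := hd t == hd t0.
have w_same0 : \sum_(t <- s | same t) w t = 0.
  have := congr1 (mcoeff (hd t0)) sv0; rewrite mcoeff0 raddf_sum (bigID same) /=.
  have -> : \sum_(t <- s | ~~ same t) (w t *: v t)@_(hd t0) = 0.
    rewrite big_seq_cond big1 // => t /andP[ts not_same].
    rewrite mcoeffZ; have [t0_v|] := boolP (hd t0 \in msupp (v t)); last first.
      by move/memN_msupp_eq0->; rewrite mulr0.
    have /lex_inj eq_hd : lex (hd t) = lex (hd t0).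
      by apply: le_anti; rewrite min_t0 // andbT; exact: (v_hd t ts).1.
    by rewrite /same eq_hd eqxx in not_same.
  rewrite addr0 => sum0; rewrite -[RHS]sum0 big_seq_cond [RHS]big_seq_cond.
  apply: eq_bigr => t /andP[ts /eqP same_t].
  by rewrite mcoeffZ -same_t (v_hd t ts).2 mulr1.
have sum_same0 (g : T -> P) : {in s, forall t, same t -> g t = g t0} ->
    \sum_(t <- s | same t) w t *: g t = 0.
  move=> g_const; rewrite big_seq_cond (eq_bigr (fun t => w t *: g t0)).
    by rewrite -scaler_suml -big_seq_cond w_same0 scale0r.
  by move=> t /andP[ts st]; rewrite g_const.
have u_same t : t \in s -> same t -> u t = u t0 by move=> ts /eqP/(hd_det _ _ ts t0s)[].
have v_same t : t \in s -> same t -> v t = v t0 by move=> ts /eqP/(hd_det _ _ ts t0s)[].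
rewrite (bigID same) /= sum_same0 // add0r -big_filter; apply: IHN.
- by move=> t; rewrite mem_filter => /andP[_ /v_hd].
- by move=> t t'; rewrite !mem_filter => /andP[_ ts] /andP[_ t's]; exact: hd_det.
- rewrite size_filter -ltnS; apply: leq_trans _ size_s; rewrite ltnS -(count_predC same s).
  rewrite -{1}[count _ s]add0n ltn_add2r -has_count.
  by apply/hasP; exists t0; rewrite /same.
- by rewrite big_filter; move: sv0; rewrite (bigID same) /= sum_same0 // add0r.
Qed.

End Triangular.

Section StandardMonomials.
Variables (R : idomainType) (n : nat) (F : 'I_n -> {mpoly R[n]}).
Hypothesis n_gt0 : (0 < n)%N.
Local Notation P := {mpoly R[n]}.
Local Notation triple := (R * 'X_{1..n} * 'X_{1..n})%type.
Implicit Types (s : seq triple) (t : triple) (N : 'X_{1..n}).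

Lemma stmonE e f : stmon F e f = ('X_[e] * \prod_(i < n) F i ^+ f i)%:F / monoK R f.
Proof.
rewrite /stmon /xprime /xK /xv /monoK.
under eq_bigr => i _ do rewrite expr_div_n -!rmorphXn mulrA -rmorphM.
by rewrite prodf_div -!rmorph_prod big_split /= -!mpolyXE_id.
Qed.

(* A triple t = (r, e, f) stands for the term r x^e x'^f of an Rst expansion;
   stnum N t is the numerator of x^e x'^f over the denominator x^N. *)
Definition stnum N t : P := 'X_[t.1.2] * \prod_(i < n) F i ^+ t.2 i * 'X_[N - t.2].

Definition stdenom s : 'X_{1..n} := (\sum_(t <- s) t.2)%MM.

Lemma le_stdenom s t : t \in s -> (t.2 <= stdenom s)%MM.
Proof.
rewrite /stdenom; elim: s => // t' s IHs; rewrite in_cons big_cons.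
by case/predU1P=> [->|/IHs le_t]; [exact: lem_addr | exact: lepm_trans le_t (lem_addl _ _)].
Qed.

Lemma deg1_stdenom s : (forall t, t \in s -> stcond t.1.2 t.2) -> deg1 (stdenom s) = 0%N.
Proof.
move=> s_st; rewrite (deg1E n_gt0) mnm_sumE big_seq big1 // => t ts.
by have [_ [f0 _]] := s_st t ts; rewrite -(deg1E n_gt0).
Qed.

Lemma Rst_common_denom c : Rst F c -> exists2 s, (forall t, t \in s -> stcond t.1.2 t.2) &
  c = (\sum_(t <- s) t.1.1 *: stnum (stdenom s) t)%:F / monoK R (stdenom s).
Proof.
case=> s [s_st ->]; exists s => //.
rewrite rmorph_sum mulr_suml big_seq [RHS]big_seq; apply: eq_bigr => t ts.
rewrite stmonE /stnum -mul_mpolyC !rmorphM /= /monoK.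
rewrite -{2}(submK (le_stdenom ts)) mpolyXD rmorphM invfM !mulrA mulfK //.
exact: monoK_neq0.
Qed.

Variable mk : 'I_n -> 'X_{1..n}.
Hypothesis kill1F_lexmonic : forall k, lexmonic (kill1 (F k)) (mk k).
Hypothesis mk_triangular : forall k i : 'I_n, (i <= k)%N -> mk k i = 0%N.

Definition sthead N t : 'X_{1..n} :=
  (t.1.2 + \sum_(i < n) mk i *+ t.2 i + (N - t.2))%MM.

Lemma kill1_stnum_lexmonic N t : stcond t.1.2 t.2 -> deg1 N = 0%N ->
  lexmonic (kill1 (stnum N t)) (sthead N t).
Proof.
case=> e0 [f0 _] N0; have Nf0 : deg1 (N - t.2)%MM = 0%N.
  by rewrite (deg1E n_gt0) mnmBE -(deg1E n_gt0) N0.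
rewrite /stnum !rmorphM /= !(kill1X _ n_gt0) e0 Nf0 eqxx rmorph_prod /=.
apply: lexmonicM; last exact: lexmonicX.
apply: lexmonicM; first exact: lexmonicX.
by apply: lexmonic_prod => i; rewrite rmorphXn /=; exact: lexmonicXn.
Qed.

(* As mk k vanishes on the indices <= k, coordinate i of the head only depends
   on e i, f i and the f k with k < i; induct on i, using that e i or f i is 0. *)
Lemma sthead_inj N t t' : stcond t.1.2 t.2 -> stcond t'.1.2 t'.2 ->
  (t.2 <= N)%MM -> (t'.2 <= N)%MM -> sthead N t = sthead N t' ->
  t.1.2 = t'.1.2 /\ t.2 = t'.2.
Proof.
move=> [_ [_ ef0]] [_ [_ ef0']] /mnm_lepP le_f /mnm_lepP le_f' eq_hd.
suff eq_lt j (i : 'I_n) : (i < j)%N -> t.1.2 i = t'.1.2 i /\ t.2 i = t'.2 i.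
  by split; apply/mnmP => i; have [] := eq_lt i.+1 i (ltnSn i).
elim: j i => // j IHj i; rewrite ltnS leq_eqVlt => /predU1P[i_j|]; last exact: IHj.
have := congr1 (fun m : 'X_{1..n} => m i) eq_hd; rewrite /sthead !mnmDE !mnmBE !mnm_sumE.
rewrite [X in _ = (_ + X + _)%N](eq_bigr (fun k => (mk k *+ t.2 k)%MM i)) /=.
  by move: (le_f i) (le_f' i) (ef0 i) (ef0' i) => ? ? [->|->] [->|->]; lia.
move=> k _; rewrite !mulmnE.
by have [lt_ki|le_ik] := ltnP k i; [rewrite (IHj k _).2 // -i_j | rewrite mk_triangular].
Qed.

Lemma Rst_kill1_neq0 c : Rst F c -> c != 0 ->
  exists p N, [/\ deg1 N = 0%N, c = p%:F / monoK R N & kill1 p != 0].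
Proof.
move=> /Rst_common_denom[s s_st ->] c_neq0; set N := stdenom s.
exists (\sum_(t <- s) t.1.1 *: stnum N t), N; split=> //; first exact: deg1_stdenom.
apply: contra c_neq0 => /eqP kill1_eq0; apply/eqP.
suff -> : \sum_(t <- s) t.1.1 *: stnum N t = 0 by rewrite rmorph0 mul0r.
apply: (@lexmonic_sum_eq0 _ _ _ s _ _ (fun t => kill1 (stnum N t)) (sthead N)).
- by move=> t ts; apply: kill1_stnum_lexmonic; [exact: s_st | exact: deg1_stdenom].
- move=> t t' ts t's eq_hd.
  have [eq_e eq_f] := sthead_inj (s_st t ts) (s_st t' t's) (le_stdenom ts) (le_stdenom t's) eq_hd.
  by rewrite /stnum eq_e eq_f.
- by rewrite -[RHS]kill1_eq0 (raddf_sum (@kill1 R n)) /=; apply: eq_bigr => t _; rewrite kill1Z.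
Qed.

End StandardMonomials.

Section FirstTerm.
Variables (R : idomainType) (n : nat) (F : 'I_n -> {mpoly R[n]}).
Hypothesis n_gt0 : (0 < n)%N.
Local Notation P := {mpoly R[n]}.
Local Notation K := {fraction P}.
Local Notation i0 := (Ordinal n_gt0).
Local Notation x1 := (('X_i0 : P)%:F : K).

Lemma kill1_lexmonic (p : P) mu : lexfirst p mu -> p@_mu = 1 -> deg1 mu = 0%N ->
  lexmonic (kill1 p) mu.
Proof.
move=> [_ mu_first] p_mu1 mu0; split; last by rewrite (mcoeff_kill1 n_gt0) mu0 eqxx.
move=> m; rewrite mcoeff_msupp (mcoeff_kill1 n_gt0).
case: (deg1 m =P 0%N) => [_ p_m|_]; last by rewrite eqxx.
have [->|ne] := eqVneq m mu; first exact: lexx.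
by apply/ltW/ltlexP; apply: mu_first; rewrite ?mcoeff_msupp.
Qed.

Lemma sum_Rst_x1_multiple (I : eqType) (r : seq I) (c : I -> K) (k : I -> nat) :
  {in r, forall i, Rst F (c i)} ->
  exists q M, deg1 M = 0%N /\ \sum_(i <- r) c i * x1 ^+ (k i).+1 = (q * 'X_i0)%:F / monoK R M.
Proof.
elim: r => [|i r IHr] Rst_r.
  exists 0, 0%MM; rewrite big_nil mul0r rmorph0 mul0r; split=> //.
  by rewrite (deg1E n_gt0) mnm0E.
rewrite big_cons; have /IHr[q [M [M0 ->]]] : {in r, forall j, Rst F (c j)}.
  by move=> j rj; apply: Rst_r; rewrite in_cons rj orbT.
have [s s_st ->] := Rst_common_denom (Rst_r i (mem_head i r)).
set N := stdenom s; set p := \sum_(t <- s) _.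
exists (p * 'X_i0 ^+ k i * 'X_[M] + q * 'X_[N]), (N + M)%MM; split.
  by rewrite (deg1D n_gt0) M0 (deg1_stdenom n_gt0 s_st).
rewrite mulrAC -rmorphXn -rmorphM exprSr mulrA addf_div ?monoK_neq0 // -monoKD.
rewrite /monoK -!rmorphM -rmorphD /= mulrDl -!mulrA.
by rewrite ['X_i0 * 'X_[M]]mulrC ['X_i0 * 'X_[N]]mulrC.
Qed.

Lemma LT_rel_x1pow_add (p q : P) (N M : 'X_{1..n}) (a : int) :
  deg1 M = 0%N -> kill1 p != 0 ->
  LT_rel (x1 ^ a * (p%:F / monoK R N + (q * 'X_i0)%:F / monoK R M))
         (x1 ^ a * ((kill1 p)%:F / monoK R N)).
Proof.
move=> M0 kp; set Q := p * 'X_[M] + q * 'X_i0 * 'X_[N].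
have kQ : kill1 Q = kill1 p * 'X_[M].
  rewrite /Q rmorphD !rmorphM /= !(kill1X _ n_gt0) M0 eqxx.
  have -> : deg1 U_(i0)%MM = 1%N by rewrite (deg1E n_gt0) mnm1E eqxx.
  by rewrite /= mulr0 mul0r addr0.
have XM : ('X_[M] : P) != 0 by rewrite -tofrac_eq0 monoK_neq0.
have E z : z / monoK R N = (z * ('X_[M] : P)%:F) / monoK R (N + M).
  by rewrite monoKD invfM mulrA mulrAC mulfK ?monoK_neq0.
rewrite addf_div ?monoK_neq0 // E -monoKD /monoK -!rmorphM -rmorphD -kQ.
by apply: LT_rel_x1pow; rewrite kQ mulf_neq0.
Qed.

End FirstTerm.

Unset Implicit Arguments.

Theorem lemma4p19 (R : idomainType) (n : nat)
  (F : 'I_n -> {mpoly R[n]})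
  (a b : int) (c : int -> {fraction {mpoly R[n]}}) :
  is_UFD R -> contains_Z R -> (2 <= n)%N ->
  LP_seed F -> condition12 F ->
  (a <= b)%R ->
  (forall m : int, (a <= m <= b)%R -> Rst F (c m)) ->
  c a != 0 ->
  let x1 : {fraction {mpoly R[n]}} := \prod_(i < n | val i == 0%N) xK R i in
  let y := \sum_(i < `|b - a|%N.+1) c (a + i%:Z) * x1 ^ (a + i%:Z) in
  exists d, phi_rel (c a) d /\ LT_rel y (d * x1 ^ a).
Proof.
move=> _ _ n_ge2 _ [_ [mk [mk_first [mk_head _]]]] le_ab Rst_c ca_neq0 x1 y.
have n_gt0 : (0 < n)%N by apply: leq_trans n_ge2.
have x1E : x1 = ('X_(Ordinal n_gt0) : {mpoly R[n]})%:F.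
  by rewrite /x1 (big_pred1 (Ordinal n_gt0)) // => i; rewrite /= -val_eqE.
have mk_tri (k i : 'I_n) : (i <= k)%N -> mk k i = 0%N by move/((mk_head k).2 i).
have kill1F k : lexmonic (kill1 (F k)) (mk k).
  by apply: (kill1_lexmonic n_gt0 (mk_first k) (mk_head k).1); rewrite (deg1E n_gt0) mk_tri.
have Rst_ca : Rst F (c a) by apply: Rst_c; rewrite lexx le_ab.
have [p [N [N0 ca_E kp]]] := Rst_kill1_neq0 n_gt0 kill1F mk_tri Rst_ca ca_neq0.
set K := `|b - a|%N.
have K_E : K%:Z = b - a by rewrite /K abszE ger0_norm // subr_ge0.
have Rst_T : {in index_enum 'I_K, forall i : 'I_K, Rst F (c (a + i.+1%:Z))}.
  by move=> i _; have := ltn_ord i => lt_iK; apply: Rst_c; apply/andP; split; lia.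
have [q [M [M0 T_E]]] := sum_Rst_x1_multiple n_gt0 val Rst_T.
exists ((kill1 p)%:F / monoK R N); split; first by exists p, N.
have y_E : y = x1 ^ a * (c a + \sum_(i < K) c (a + i.+1%:Z) * x1 ^+ i.+1).
  rewrite /y big_ord_recl /= addr0 mulrDr mulr_sumr mulrC; congr (_ + _).
  apply: eq_bigr => i _; rewrite expfzDr ?x1E ?monoK_neq0 // -exprnP mulrCA.
  by rewrite /bump /= add1n.
by rewrite y_E ca_E x1E T_E [_ * _ ^ a]mulrC; apply: LT_rel_x1pow_add.
Qed.
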